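(* Let $1\le k\le d$, let $\gamma(t)=(t,t^2,\dots,t^d)$ be the moment curve in $\mathbb{R}^d$, and let $U_1,U_2$ be two $k$-element sets of points on $\gamma$. Write $W=U_1\cup U_2=\{w_1,\dots,w_m\}$ with $w_i=\gamma(t_i)$ and $t_1<\dots<t_m$. Call a subset $\{w_{i_1},\dots,w_{i_q}\}\subseteq W$ with $i_1<\dots<i_q$ contiguous if $i_q-i_1=q-1$. Suppose that for some $j\in\{1,2\}$ one can write $U_j=Y_S\cup X_1\cup\dots\cup X_t\cup Y_E$ ($t\ge0$) with all of $Y_S,X_1,\dots,X_t,Y_E$ contiguous, $Y_S=\emptyset$ or $w_1\in Y_S$, $Y_E=\emptyset$ or $w_m\in Y_E$, and at most $d-k$ of the sets $X_i$ of odd cardinality. Then $\operatorname{conv}U_1\cap\operatorname{conv}U_2=\operatorname{conv}(U_1\cap U_2)$. *)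

From HB Require Import structures.
From mathcomp Require Import all_boot all_order all_algebra.
Set Implicit Arguments. Unset Strict Implicit. Unset Printing Implicit Defensive.
Import Order.TTheory GRing.Theory Num.Theory.
Local Open Scope ring_scope.

Definition moment (R : realFieldType) (d : nat) (t : R) : 'rV[R]_d :=
  \row_(i < d) t ^+ i.+1.

Definition conv (R : realFieldType) (d : nat) (S : seq 'rV[R]_d) (x : 'rV[R]_d) : Prop :=
  exists lam : 'I_(size S) -> R,
    (forall i, 0 <= lam i) /\ \sum_(i < size S) lam i = 1 /\
    x = \sum_(i < size S) lam i *: S`_i.

(* W = U1 u U2 listed by increasing parameter: w_1, ..., w_m *)
Definition Wseq (R : realFieldType) (U1 U2 : seq R) : seq R :=
  sort (fun a b : R => a <= b) (undup (U1 ++ U2)).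

Definition contiguous (R : realFieldType) (W X : seq R) : Prop :=
  exists i q : nat, X =i take q (drop i W).

Definition good_decomposition (R : realFieldType) (d k : nat) (W U : seq R) : Prop :=
  exists (YS YE : seq R) (Xs : seq (seq R)),
    perm_eq U (YS ++ flatten Xs ++ YE) /\
    contiguous W YS /\ contiguous W YE /\
    (forall X, X \in Xs -> contiguous W X) /\
    (YS = [::] \/ head 0 W \in YS) /\
    (YE = [::] \/ last 0 W \in YE) /\
    (count (fun X : seq R => odd (size X)) Xs <= d - k)%N.

From HB Require Import structures.
From mathcomp Require Import all_boot all_order all_algebra.
From mathcomp Require Import lra zify.
Import Order.TTheory GRing.Theory Num.Theory.
Set Implicit Arguments. Unset Strict Implicit. Unset Printing Implicit Defensive.
Local Open Scope ring_scope.

(* The inclusion conv (U1 :&: U2) <= conv U1 :&: conv U2 is trivial.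
   Conversely let U be the set among U1, U2 with a good decomposition and V the
   other one.  We build a polynomial p of degree <= d which is >= 0 on U, > 0 on
   U \ V and <= 0 on V (a "separating" polynomial).  As deg p <= d, t |-> p.[t] is
   an affine function of gamma(t); so if x = sum mu_u gamma(u) = sum nu_v gamma(v)
   then sum mu_u p(u) = sum nu_v p(v) <= 0 <= sum mu_u p(u), which forces all the
   weight mu to sit on U :&: V (separated_conv).
   The polynomial is - q, where q has a prescribed "sign pattern" on W = U :|: V:
   negative on U \ V, zero on U :&: V and positive on W \ U.  Such q are built
   multiplicatively: two consecutive points of W cost a quadratic factor whose
   roots are at (or just outside) them, an extremal point of W a linear factor.
   Hence a contiguous block of size s costs degree s + (s mod 2), and only s when
   it contains w_1 or w_m; summing over a good decomposition gives degree at most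
   k + (d - k) = d (decomposition_pattern). *)

Section ConvexMoment.
Variables (R : realFieldType) (d : nat).

Definition conv_moment (S : seq R) (x : 'rV[R]_d) : Prop :=
  exists mu : R -> R, (forall u, u \in S -> 0 <= mu u) /\
    \sum_(u <- S) mu u = 1 /\ x = \sum_(u <- S) mu u *: moment d u.

Definition affp (p : {poly R}) (x : 'rV[R]_d) : R :=
  p`_0 + \sum_(i < d) p`_i.+1 * x 0 i.

Lemma affp_moment (p : {poly R}) t :
  (size p <= d.+1)%N -> affp p (moment d t) = p.[t].
Proof.
move=> sp; rewrite (horner_coef_wide t sp) big_ord_recl expr0 mulr1 /affp.
by congr (_ + _); apply: eq_bigr => i _; rewrite mxE.
Qed.

(* Since the weights sum to 1, affp commutes with convex combinations. *)
Lemma affp_conv (p : {poly R}) (S : seq R) (mu : R -> R) :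
  (size p <= d.+1)%N -> \sum_(u <- S) mu u = 1 ->
  affp p (\sum_(u <- S) mu u *: moment d u) = \sum_(u <- S) mu u * p.[u].
Proof.
move=> sp m1; rewrite /affp.
under eq_bigr => i _ do rewrite summxE mulr_sumr.
rewrite -[p`_0]mulr1 -m1 mulr_sumr.
rewrite exchange_big -big_split /=; apply: eq_bigr => u _.
rewrite -(affp_moment _ sp) /affp mulrDr mulr_sumr mulrC; congr (_ + _).
by apply: eq_bigr => i _; rewrite !mxE mulrCA.
Qed.

(* The padding value of nth on moment points is gamma(0) = 0. *)
Lemma nth_map_moment (S : seq R) (i : nat) :
  (map (moment d) S)`_i = moment d S`_i.
Proof.
case: (ltnP i (size S)) => hi; first by rewrite (nth_map 0).
rewrite !nth_default ?size_map //.
by apply/rowP => j; rewrite !mxE expr0n.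
Qed.

(* Indexing the weights by positions or by parameters is equivalent for
   duplicate-free lists: weights at equal parameters are regrouped. *)
Lemma conv_momentE (S : seq R) (x : 'rV[R]_d) :
  uniq S -> conv (map (moment d) S) x <-> conv_moment S x.
Proof.
move=> uS; rewrite /conv size_map; split.
- case=> lam [l0 [l1 lx]].
  pose mu u := \sum_(i < size S | S`_i == u) lam i.
  have regroup (V : lmodType R) (G : R -> V) :
      \sum_(u <- S) mu u *: G u = \sum_(i < size S) lam i *: G S`_i.
    under eq_bigr => u _ do rewrite /mu scaler_suml big_mkcond.
    rewrite exchange_big /=; apply: eq_bigr => i _.
    rewrite (bigD1_seq S`_i) ?mem_nth //= eqxx big1 ?addr0 //.
    by move=> u /negbTE; rewrite eq_sym => ->.
  exists mu; split; [|split].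
  + by move=> u _; apply: sumr_ge0 => i _; exact: l0.
  + have := regroup R^o (fun _ => 1); rewrite /GRing.scale /=.
    by under eq_bigr do rewrite mulr1; under [in RHS]eq_bigr do rewrite mulr1; move=> ->.
  + by rewrite regroup lx; apply: eq_bigr => i _; rewrite nth_map_moment.
- case=> mu [m0 [m1 mx]]; exists (fun i => mu S`_i); split; [|split].
  + by move=> i; apply/m0/mem_nth.
  + by rewrite -m1 (big_nth 0) big_mkord.
  + by rewrite mx (big_nth 0) big_mkord; apply: eq_bigr => i _; rewrite nth_map_moment.
Qed.

Lemma conv_moment_perm (S S' : seq R) (x : 'rV[R]_d) :
  perm_eq S S' -> conv_moment S x -> conv_moment S' x.
Proof.
move=> pSS' [mu [m0 [m1 mx]]]; exists mu; split; [|split].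
- by move=> u; rewrite -(perm_mem pSS') => /m0.
- by rewrite -(perm_big _ pSS').
- by rewrite -(perm_big _ pSS').
Qed.

(* Hulls grow with the list: extend the weights by zero. *)
Lemma conv_moment_filter (P : pred R) (S : seq R) (x : 'rV[R]_d) :
  conv_moment [seq u <- S | P u] x -> conv_moment S x.
Proof.
case=> mu [m0 [m1 mx]]; exists (fun u => if P u then mu u else 0); split; [|split].
- by move=> u uS; case: ifP => // Pu; apply: m0; rewrite mem_filter Pu.
- by rewrite -big_mkcond -big_filter.
- rewrite mx big_filter big_mkcond; apply: eq_bigr => u _.
  by case: ifP; rewrite ?scale0r.
Qed.

Lemma conv_moment_restrict (P : pred R) (S : seq R) (mu : R -> R) (x : 'rV[R]_d) :
  (forall u, u \in S -> 0 <= mu u) -> \sum_(u <- S) mu u = 1 ->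
  x = \sum_(u <- S) mu u *: moment d u ->
  (forall u, u \in S -> ~~ P u -> mu u = 0) -> conv_moment [seq u <- S | P u] x.
Proof.
move=> m0 m1 mx mP; exists mu; split; [|split].
- by move=> u; rewrite mem_filter => /andP[_ /m0].
- by rewrite -m1 big_filter; apply: big_rmcond_in.
- rewrite mx big_filter; symmetry; apply: big_rmcond_in => u uS /(mP u uS) ->.
  exact: scale0r.
Qed.

Definition separating (p : {poly R}) (U V : seq R) : Prop :=
  [/\ forall u, u \in U -> 0 <= p.[u],
      forall u, u \in U -> u \notin V -> 0 < p.[u] &
      forall v, v \in V -> p.[v] <= 0].

Theorem separated_conv (p : {poly R}) (U V : seq R) (x : 'rV[R]_d) :
  (size p <= d.+1)%N -> separating p U V ->
  conv_moment U x -> conv_moment V x -> conv_moment [seq u <- U | u \in V] x.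
Proof.
move=> sp [pU pUV pV] [mu [m0 [m1 mx]]] [nu [n0 [n1 nx]]].
have terms_ge0 u : u \in U -> 0 <= mu u * p.[u] by move=> uU; rewrite mulr_ge0 ?m0 ?pU.
have value_eq : \sum_(u <- U) mu u * p.[u] = \sum_(v <- V) nu v * p.[v].
  by rewrite -(affp_conv sp m1) -(affp_conv sp n1) -mx -nx.
have value_le0 : \sum_(v <- V) nu v * p.[v] <= 0.
  by rewrite big_seq sumr_le0 // => v vV; rewrite mulr_ge0_le0 ?n0 ?pV.
have value0 : \sum_(u <- U | u \in U) mu u * p.[u] == 0.
  by rewrite -big_seq eq_le {1}value_eq value_le0 big_seq sumr_ge0.
move: value0; rewrite psumr_eq0 // => /allP terms0.
apply: (conv_moment_restrict m0 m1 mx) => u uU uV.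
have := implyP (terms0 u uU) uU.
by rewrite mulf_eq0 (gt_eqF (pUV u uU uV)) orbF => /eqP.
Qed.
End ConvexMoment.

Lemma below_gap (R : realFieldType) (S : seq R) (a : R) :
  exists2 r, r < a & forall w, w \in S -> w < a -> w < r.
Proof.
elim: S => [|y S [r ra hr]]; first by exists (a - 1) => //; lra.
case: (ltP y a) => [ya|ay]; last first.
  by exists r => // w; rewrite inE => /orP[/eqP->|/hr//]; rewrite ltNge ay.
exists (Num.max r ((y + a) / 2)); first by rewrite gt_max ra /=; lra.
move=> w; rewrite inE lt_max => /orP[/eqP-> _|wS /(hr w wS)-> //].
by apply/orP; right; lra.
Qed.

(* The mirror image of below_gap, obtained by negation. *)
Lemma above_gap (R : realFieldType) (S : seq R) (b : R) :
  exists2 r, b < r & forall w, w \in S -> b < w -> r < w.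
Proof.
have [r rb hr] := below_gap (map -%R S) (- b).
exists (- r) => [|w wS bw]; first by rewrite ltrNr.
by rewrite ltrNl hr ?map_f // ltrN2.
Qed.

Lemma uniq_infix (T : eqType) (l B r : seq T) : uniq (l ++ B ++ r) -> uniq B.
Proof. by rewrite !cat_uniq => /and3P[_ _ /and3P[]]. Qed.

Lemma head_infix (T : eqType) (x0 : T) (l B r : seq T) :
  uniq (l ++ B ++ r) -> head x0 (l ++ B ++ r) \in B -> l = [::].
Proof.
by case: l => [|y l] //= /andP[yn _] yB; rewrite !mem_cat yB orbT in yn.
Qed.

Lemma last_infix (T : eqType) (x0 : T) (l B r : seq T) :
  uniq (l ++ B ++ r) -> last x0 (l ++ B ++ r) \in B -> r = [::].
Proof.
case/lastP: r => [|r y] //; rewrite !last_cat last_rcons catA cat_uniq.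
case/and3P=> _ /hasPn yn _ yB; have := yn y; rewrite mem_rcons mem_head mem_cat yB orbT.
by move/(_ isT).
Qed.

Lemma sorted_adjacent (R : realFieldType) (l s : seq R) (a b : R) :
  sorted <%R (l ++ a :: b :: s) ->
  a < b /\ forall w, w \in l ++ a :: b :: s -> w != a -> w != b -> w < a \/ b < w.
Proof.
rewrite (sorted_pairwise lt_trans) pairwise_cat /= => /and3P[/allrelP lA _].
case/andP=> /andP[ab /allP aS] /andP[/allP bS _]; split => // w.
rewrite mem_cat !inE => /or3P[wl|/eqP->|/orP[/eqP->|ws]]; rewrite ?eqxx //.
- by left; apply: lA; rewrite ?mem_head.
- by right; apply: bS.
Qed.

Lemma sorted_head_min (R : realFieldType) (a : R) (s : seq R) :
  sorted <%R (a :: s) -> forall w, w \in a :: s -> a <= w.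
Proof.
rewrite (sorted_pairwise lt_trans) /= => /andP[/allP amin _] w.
by rewrite inE => /orP[/eqP->//|/amin/ltW].
Qed.

Lemma sorted_last_max (R : realFieldType) (s : seq R) (b : R) :
  sorted <%R (rcons s b) -> forall w, w \in rcons s b -> w <= b.
Proof.
rewrite -cats1 (sorted_pairwise lt_trans) pairwise_cat => /and3P[/allrelP bmax _ _] w.
by rewrite mem_cat inE => /orP[ws|/eqP->//]; apply/ltW/bmax; rewrite ?mem_head.
Qed.

Section SignPatterns.
Variables (R : realFieldType) (W V : seq R).

Definition sign_pattern (q : {poly R}) (B : seq R) : Prop :=
  forall w, w \in W -> [/\ w \in B -> w \notin V -> q.[w] < 0,
                          w \in B -> w \in V -> q.[w] = 0 &
                          w \notin B -> 0 < q.[w]].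

Definition has_pattern (n : nat) (B : seq R) : Prop :=
  exists2 q : {poly R}, (size q <= n.+1)%N & sign_pattern q B.

Lemma has_pattern_nil : has_pattern 0 [::].
Proof. by exists 1; rewrite ?size_poly1 // => w _; rewrite hornerC; split. Qed.

Lemma has_pattern_eq (n : nat) (B B' : seq R) :
  B =i B' -> has_pattern n B -> has_pattern n B'.
Proof. by move=> eB [q sq hq]; exists q => // w /hq; rewrite !eB. Qed.

Lemma has_pattern_le (m n : nat) (B : seq R) :
  (m <= n)%N -> has_pattern m B -> has_pattern n B.
Proof. by move=> mn [q sq hq]; exists q => //; apply: leq_trans sq _. Qed.

Lemma has_pattern_cat (m n : nat) (B1 B2 : seq R) :
  uniq (B1 ++ B2) -> has_pattern m B1 -> has_pattern n B2 ->
  has_pattern (m + n)%N (B1 ++ B2).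
Proof.
rewrite cat_uniq => /and3P[_ /hasPn disj _] [q1 s1 h1] [q2 s2 h2].
exists (q1 * q2).
  by apply: leq_trans (size_polyMleq _ _) _; lia.
move=> w wW; have [n1 z1 p1] := h1 w wW; have [n2 z2 p2] := h2 w wW.
rewrite hornerM mem_cat; split.
- case/orP=> [wB1|wB2] wV.
    by rewrite pmulr_llt0 ?n1 ?p2 // (contraL (disj w)).
  by rewrite pmulr_rlt0 ?n2 ?p1 ?disj.
- by case/orP=> [wB1|wB2] wV; [rewrite z1 ?mul0r | rewrite z2 ?mulr0].
- by rewrite negb_or => /andP[nB1 nB2]; rewrite mulr_gt0 ?p1 ?p2.
Qed.

(* A root r at a if a \in V, and otherwise slightly below a, with no point
   of W in ]r, a[; upper_root is the mirror choice. *)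
Lemma lower_root (a : R) : exists r,
  [/\ r <= a, if a \in V then r = a else r < a & forall w, w \in W -> w < a -> w < r].
Proof.
case: (boolP (a \in V)) => aV; first by exists a; split.
by have [r ra hr] := below_gap W a; exists r; split => //; apply: ltW.
Qed.

Lemma upper_root (b : R) : exists r,
  [/\ b <= r, if b \in V then r = b else b < r & forall w, w \in W -> b < w -> r < w].
Proof.
case: (boolP (b \in V)) => bV; first by exists b; split.
by have [r br hr] := above_gap W b; exists r; split => //; apply: ltW.
Qed.

(* Two points a <= b of W with no point of W in between (possibly a = b):
   (X - ra)(X - rb) is negative or zero at a and b and positive elsewhere on W. *)
Lemma pair_pattern (a b : R) :
  a <= b -> (forall w, w \in W -> w != a -> w != b -> w < a \/ b < w) ->
  has_pattern 2 [:: a; b].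
Proof.
move=> ab between.
have [ra [raa raV hra]] := lower_root a; have [rb [brb rbV hrb]] := upper_root b.
exists (('X - ra%:P) * ('X - rb%:P)).
  by apply: leq_trans (size_polyMleq _ _) _; rewrite !size_XsubC.
move=> w wW; rewrite hornerM !hornerXsubC !inE; split.
- case/orP=> /eqP-> wV.
    have ara : ra < a by move: raV; rewrite (negbTE wV).
    have arb : a < rb.
      case: (boolP (b \in V)) => bV; last by move: rbV; rewrite (negbTE bV); lra.
      move: rbV; rewrite bV => ->.
      by rewrite lt_neqAle ab andbT; apply: contraNneq wV => ->.
    nra.
  have brb' : b < rb by move: rbV; rewrite (negbTE wV).
  have rab : ra < b.
    case: (boolP (a \in V)) => aV; last by move: raV; rewrite (negbTE aV); lra.
    move: raV; rewrite aV => ->.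
    by rewrite lt_neqAle ab andbT; apply: contraNneq wV => <-.
  nra.
- case/orP=> /eqP-> wV.
    by move: raV; rewrite wV => ->; rewrite subrr mul0r.
  by move: rbV; rewrite wV => ->; rewrite subrr mulr0.
- rewrite negb_or => /andP[wa wb]; case: (between w wW wa wb) => [wlt|wgt].
    by have := hra w wW wlt; nra.
  by have := hrb w wW wgt; nra.
Qed.

(* An extremal point of W is handled by a single linear factor. *)
Lemma min_pattern (a : R) : (forall w, w \in W -> a <= w) -> has_pattern 1 [:: a].
Proof.
move=> amin; have [r [ar rV hr]] := upper_root a.
exists ('X - r%:P); first by rewrite size_XsubC.
move=> w wW; rewrite hornerXsubC inE; split.
- by move=> /eqP-> aV; move: rV; rewrite (negbTE aV); rewrite subr_lt0.
- by move=> /eqP-> aV; move: rV; rewrite aV => ->; rewrite subrr.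
- move=> wa; have aw : a < w by rewrite lt_neqAle eq_sym wa amin.
  by rewrite subr_gt0 hr.
Qed.

Lemma max_pattern (b : R) : (forall w, w \in W -> w <= b) -> has_pattern 1 [:: b].
Proof.
move=> bmax; have [r [rb rV hr]] := lower_root b.
exists (r%:P - 'X); first by rewrite -opprB size_polyN size_XsubC.
move=> w wW; rewrite hornerD hornerN hornerC hornerX inE; split.
- by move=> /eqP-> bV; move: rV; rewrite (negbTE bV); rewrite subr_lt0.
- by move=> /eqP-> bV; move: rV; rewrite bV => ->; rewrite subrr.
- move=> wb; have wltb : w < b by rewrite lt_neqAle wb bmax.
  by rewrite subr_gt0 hr.
Qed.

Hypothesis sortedW : sorted <%R W.

Let uniqW : uniq W := lt_sorted_uniq sortedW.

(* A block of W costs its size rounded up to an even number: pair up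
   consecutive points, a leftover point is paired with itself. *)
Lemma infix_pattern (l B r : seq R) :
  W = l ++ B ++ r -> has_pattern (size B + odd (size B))%N B.
Proof.
have [n ltBn] := ubnP (size B); elim: n => // n IH in l B ltBn *.
case: B ltBn => [|a [|b B]] /= ltBn eW.
- exact: has_pattern_nil.
- apply: has_pattern_eq (pair_pattern (lexx a) _) => [w|w _ wa _].
    by rewrite !inE orbb.
  by case/orP: (lt_total wa); [left|right].
- have := sortedW; rewrite {1}eW => /sorted_adjacent[ab between].
  rewrite -eW in between.
  have eW' : W = (l ++ [:: a; b]) ++ B ++ r by rewrite eW -catA.
  have uB : uniq ([:: a; b] ++ B) by apply: (@uniq_infix _ l _ r); rewrite -eW.
  have IHB : has_pattern (size B + odd (size B))%N B by apply: (IH _ _ _ eW'); lia.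
  rewrite negbK -add2n -addnA.
  exact: has_pattern_cat uB (pair_pattern (ltW ab) between) IHB.
Qed.

(* An initial (resp. final) block costs only its size: when odd, its first
   (resp. last) point is the minimum (resp. maximum) of W and costs degree 1. *)
Lemma prefix_pattern (B r : seq R) : W = B ++ r -> has_pattern (size B) B.
Proof.
move=> eW; case: (boolP (odd (size B))) => oddB; last first.
  by have := @infix_pattern [::] B r eW; rewrite (negbTE oddB) addn0.
case: B eW oddB => // a B eW /= /negbTE evenB.
have amin : forall w, w \in W -> a <= w.
  by have := sortedW; rewrite eW; apply: sorted_head_min.
have uB : uniq ([:: a] ++ B) by apply: (@uniq_infix _ [::] _ r); rewrite -eW.
have := has_pattern_cat uB (min_pattern amin) (@infix_pattern [:: a] B r eW).
by rewrite evenB addn0 add1n.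
Qed.

Lemma suffix_pattern (l B : seq R) : W = l ++ B -> has_pattern (size B) B.
Proof.
move=> eW; case: (boolP (odd (size B))) => oddB; last first.
  by have := @infix_pattern l B [::]; rewrite cats0 (negbTE oddB) addn0; apply.
case/lastP: B eW oddB => // B b eW; rewrite size_rcons /= => /negbTE evenB.
have eW' : W = l ++ B ++ [:: b] by rewrite eW cats1.
have bmax : forall w, w \in W -> w <= b.
  by have := sortedW; rewrite eW -rcons_cat; apply: sorted_last_max.
have uB : uniq (B ++ [:: b]) by apply: (@uniq_infix _ l _ [::]); rewrite cats0 -eW'.
have := has_pattern_cat uB (infix_pattern eW') (max_pattern bmax).
by rewrite cats1 evenB addn0 addn1.
Qed.

Lemma contiguous_infix (X : seq R) : uniq X -> contiguous W X ->
  exists l B r, [/\ W = l ++ B ++ r, X =i B & size X = size B].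
Proof.
move=> uX [i [q eX]]; exists (take i W), (take q (drop i W)), (drop q (drop i W)).
split=> //; first by rewrite !cat_take_drop.
by apply/perm_size/uniq_perm; rewrite ?take_uniq ?drop_uniq.
Qed.

(* The block costs, transported to contiguous sets; the head/last conditions
   of a good decomposition say that Y_S, Y_E are initial/final blocks. *)
Lemma contiguous_pattern (X : seq R) : uniq X -> contiguous W X ->
  has_pattern (size X + odd (size X))%N X.
Proof.
move=> uX /(contiguous_infix uX)[l [B [r [eW eX ->]]]].
exact: has_pattern_eq (fun w => esym (eX w)) (infix_pattern eW).
Qed.

Lemma first_contiguous_pattern (X : seq R) : uniq X -> contiguous W X ->
  (X = [::] \/ head 0 W \in X) -> has_pattern (size X) X.
Proof.
move=> uX cX [->|hX]; first exact: has_pattern_nil.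
have [l [B [r [eW eX ->]]]] := contiguous_infix uX cX.
have l0 : l = [::] by apply: (head_infix (x0 := 0) (B := B) (r := r)); rewrite -eW -?eX.
by rewrite l0 /= in eW; apply: has_pattern_eq (fun w => esym (eX w)) (prefix_pattern eW).
Qed.

Lemma last_contiguous_pattern (X : seq R) : uniq X -> contiguous W X ->
  (X = [::] \/ last 0 W \in X) -> has_pattern (size X) X.
Proof.
move=> uX cX [->|hX]; first exact: has_pattern_nil.
have [l [B [r [eW eX ->]]]] := contiguous_infix uX cX.
have r0 : r = [::] by apply: (last_infix (x0 := 0) (l := l) (B := B)); rewrite -eW -?eX.
rewrite r0 cats0 in eW.
exact: has_pattern_eq (fun w => esym (eX w)) (suffix_pattern eW).
Qed.

Lemma flatten_pattern (Xs : seq (seq R)) :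
  uniq (flatten Xs) -> (forall X, X \in Xs -> contiguous W X) ->
  has_pattern (size (flatten Xs) + count (fun X : seq R => odd (size X)) Xs)%N (flatten Xs).
Proof.
elim: Xs => [|X Xs IH] /= uXs cXs; first exact: has_pattern_nil.
have uX : uniq X by move: uXs; rewrite cat_uniq => /andP[].
have uF : uniq (flatten Xs) by move: uXs; rewrite cat_uniq => /and3P[].
have hX := contiguous_pattern uX (cXs X (mem_head _ _)).
have hF := IH uF (fun Y hY => cXs Y (mem_behead (hY : Y \in behead (X :: Xs)))).
by rewrite size_cat addnACA; apply: has_pattern_cat.
Qed.

Lemma decomposition_pattern (d k : nat) (U : seq R) :
  uniq U -> size U = k -> (k <= d)%N -> good_decomposition d k W U -> has_pattern d U.
Proof.
move=> uU sU kd [YS [YE [Xs [pU [cS [cE [cX [hS [hE oddXs]]]]]]]]].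
have uD : uniq (YS ++ flatten Xs ++ YE) by rewrite -(perm_uniq pU).
have uFE : uniq (flatten Xs ++ YE) by move: uD; rewrite cat_uniq => /and3P[].
have uS : uniq YS by move: uD; rewrite cat_uniq => /andP[].
have uF : uniq (flatten Xs) by move: uFE; rewrite cat_uniq => /andP[].
have uE : uniq YE by move: uFE; rewrite cat_uniq => /and3P[].
have hD := has_pattern_cat uD (first_contiguous_pattern uS cS hS)
  (has_pattern_cat uFE (flatten_pattern uF cX) (last_contiguous_pattern uE cE hE)).
apply: has_pattern_eq (fun w => esym (perm_mem pU w)) (has_pattern_le _ hD).
by rewrite addnAC addnA -!size_cat -(perm_size pU) sU -leq_subRL.
Qed.
End SignPatterns.

Lemma pattern_separating (R : realFieldType) (W U V : seq R) (q : {poly R}) :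
  (forall w, (w \in W) = (w \in U) || (w \in V)) ->
  sign_pattern W V q U -> separating (- q) U V.
Proof.
move=> mW hq.
have inW_U u : u \in U -> u \in W by rewrite mW => ->.
have inW_V v : v \in V -> v \in W by rewrite mW orbC => ->.
split=> [u uU|u uU uV|v vV].
- have [neg zero _] := hq u (inW_U u uU).
  rewrite hornerN oppr_ge0; case: (boolP (u \in V)) => uV; first by rewrite zero.
  exact/ltW/neg.
- have [neg _ _] := hq u (inW_U u uU).
  by rewrite hornerN oppr_gt0 neg.
- have [_ zero pos] := hq v (inW_V v vV).
  rewrite hornerN oppr_le0; case: (boolP (v \in U)) => vU; first by rewrite zero.
  exact/ltW/pos.
Qed.

Lemma separating_polynomial (R : realFieldType) (d k : nat) (W U V : seq R) :
  sorted <%R W -> (forall w, (w \in W) = (w \in U) || (w \in V)) ->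
  uniq U -> size U = k -> (k <= d)%N -> good_decomposition d k W U ->
  exists2 p : {poly R}, (size p <= d.+1)%N & separating p U V.
Proof.
move=> sW mW uU sU kd gd; have [q sq hq] := decomposition_pattern V sW uU sU kd gd.
by exists (- q); [rewrite size_polyN | exact: pattern_separating mW hq].
Qed.

Theorem mainTheorem6 (R : realFieldType) (d k : nat) (U1 U2 : seq R) :
  (1 <= k <= d)%N ->
  uniq U1 -> size U1 = k ->
  uniq U2 -> size U2 = k ->
  (good_decomposition d k (Wseq U1 U2) U1 \/
   good_decomposition d k (Wseq U1 U2) U2) ->
  forall x : 'rV[R]_d,
    (conv (map (moment d) U1) x /\ conv (map (moment d) U2) x) <->
    conv (map (moment d) [seq u <- U1 | u \in U2]) x.
Proof.
move=> /andP[_ kd] uU1 sU1 uU2 sU2 gd x.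
have sW : sorted <%R (Wseq U1 U2) by rewrite sort_lt_sorted undup_uniq.
have mW w : (w \in Wseq U1 U2) = (w \in U1) || (w \in U2).
  by rewrite mem_sort mem_undup mem_cat.
have pF : perm_eq [seq u <- U2 | u \in U1] [seq u <- U1 | u \in U2].
  by apply: uniq_perm; rewrite ?filter_uniq // => w; rewrite !mem_filter andbC.
rewrite (conv_momentE _ uU1) (conv_momentE _ uU2) (conv_momentE _ (filter_uniq _ uU1)).
split=> [[c1 c2]|c].
- case: gd => [gd1|gd2].
    have [p sp sep] := separating_polynomial sW mW uU1 sU1 kd gd1.
    exact: separated_conv sp sep c1 c2.
  have mW' w : (w \in Wseq U1 U2) = (w \in U2) || (w \in U1) by rewrite mW orbC.
  have [p sp sep] := separating_polynomial sW mW' uU2 sU2 kd gd2.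
  exact: conv_moment_perm pF (separated_conv sp sep c2 c1).
- split; first exact: conv_moment_filter c.
  by apply: (conv_moment_filter (P := mem U1)); apply: conv_moment_perm c; rewrite perm_sym.
Qed.
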